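(* Let $E$ be a Banach space, $p$ a prime, and $\sigma:E\to E$ a linear isometry with $\sigma^p=\mathrm{id}$, generating a $\mathbb{Z}_p$-action; let $F_\sigma=\{U\in E:\sigma U=U\}$. Let $A\subset E$ be a compact set such that $\mathbb{Z}_p(A):=\bigcup_{i=0}^{p-1}\sigma^i(A)\subset E\setminus F_\sigma$ and $\bigcap_{i=0}^{p-1}\sigma^i(A)=\emptyset$. Then $\gamma(\mathbb{Z}_p(A))\le p-1$.
   Context: For a compact $\sigma$-invariant set $A\subset E\setminus F_\sigma$, the index $\gamma(A)$ is the smallest $m\in\mathbb{N}$ for which there exists a continuous map $h:A\to\mathbb{C}^m\setminus\{0\}$ with $h(\sigma U)=e^{2\pi i/p}h(U)$ for all $U\in A$; $\gamma(A)=\infty$ if no such map exists. *)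

From HB Require Import structures.
From mathcomp Require Import all_boot all_order all_algebra.
From mathcomp Require Import all_classical all_reals all_analysis.
Set Implicit Arguments. Unset Strict Implicit. Unset Printing Implicit Defensive.
Import Order.TTheory GRing.Theory Num.Theory.
Import numFieldNormedType.Exports.
Local Open Scope classical_set_scope.
Local Open Scope ring_scope.

Section Defs.
Variables (R : realType) (E : normedModType R).

(* C^m is represented as R^m x R^m (real part, imaginary part). *)
Definition cvec (m : nat) := ('rV[R]_m * 'rV[R]_m)%type.

(* multiplication of every coordinate of z in C^m by e^{i t} *)
Definition crot (m : nat) (t : R) (z : cvec m) : cvec m :=
  (cos t *: z.1 - sin t *: z.2, sin t *: z.1 + cos t *: z.2).

Definition Fix (sigma : E -> E) : set E := [set U | sigma U = U].

Definition Zp_orbit (sigma : E -> E) (p : nat) (A : set E) : set E :=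
  \bigcup_(i in `I_p) (iter i sigma @` A).

Definition index_map (sigma : E -> E) (p : nat) (A : set E) (m : nat)
    (h : E -> cvec m) : Prop :=
  [/\ {within A, continuous h},
      (forall U, A U -> h U != (0, 0)) &
      (forall U, A U -> h (sigma U) = crot (2 * pi / p%:R) (h U))].

Definition has_index (sigma : E -> E) (p : nat) (A : set E) (m : nat) : Prop :=
  exists h : E -> cvec m, index_map sigma p A h.

Lemma has_index_exb (sigma : E -> E) (p : nat) (A : set E) :
  (exists m, has_index sigma p A m) ->
  exists m, `[< has_index sigma p A m >].
Proof. by move=> [m Hm]; exists m; apply/asboolP. Qed.

(* gamma(A): Some (least m) if such a map exists, None (= infinity) otherwise *)
Definition gamma (sigma : E -> E) (p : nat) (A : set E) : option nat :=
  match pselect (exists m, has_index sigma p A m) with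
  | left H => Some (ex_minn (has_index_exb H))
  | right _ => None
  end.

End Defs.

From HB Require Import structures.
From mathcomp Require Import all_boot all_order all_algebra.
From mathcomp Require Import all_classical all_reals all_analysis.
From mathcomp Require Import complex lra zify.
Set Implicit Arguments. Unset Strict Implicit. Unset Printing Implicit Defensive.
Import Order.TTheory GRing.Theory Num.Theory.
Import numFieldNormedType.Exports.
Local Open Scope classical_set_scope.
Local Open Scope complex_scope.
Local Open Scope ring_scope.

(* Let w = e^(2 pi i / p) and, for U in E, let x_j(U) = d(sigma^j U, A) be
   the distances to A along the sigma-orbit of U (a p-periodic sequence).
   Its discrete Fourier coefficients c_k(U) = sum_j x_j(U) w^(k j) are
   continuous and satisfy c_k(sigma U) = w^(-k) c_k(U); for 0 < k < p the
   twist w^(-k) is a primitive p-th root of unity (p is prime), so a suitable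
   power z_k = c_k^(e_k) satisfies z_k(sigma U) = w z_k(U).  If all z_k(U),
   0 < k < p, vanish at some U in Z_p(A), Fourier inversion makes the x_j(U)
   all equal; one of them is 0, so (A being closed) the whole orbit of U lies
   in A, i.e. U lies in every sigma^i(A), contradicting the empty
   intersection.  Hence (z_1, ..., z_(p-1)) is an index map into C^(p-1). *)

Section PeriodicMap.
Variables (T : Type) (sigma : T -> T) (p : nat).
Hypothesis sigma_period : forall U, iter p sigma U = U.

Lemma iter_mulp q U : iter (q * p) sigma U = U.
Proof. by elim: q => [//|q IHq]; rewrite mulSn iterD IHq sigma_period. Qed.

Lemma iter_mod n U : iter n sigma U = iter (n %% p)%N sigma U.
Proof. by rewrite {1}(divn_eq n p) iterD iter_mulp. Qed.

Lemma iter_subp_inv i U :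
  (i <= p)%N -> iter ((p - i) %% p)%N sigma (iter i sigma U) = U.
Proof. by move=> lei; rewrite -iterD iter_mod modnDml subnK // modnn. Qed.

Lemma iter_inv_subp i U :
  (i <= p)%N -> iter i sigma (iter ((p - i) %% p)%N sigma U) = U.
Proof. by move=> lei; rewrite -iterD addnC iterD iter_subp_inv. Qed.

Lemma Zp_orbitP (A : set T) U : (\bigcup_(i in `I_p) (iter i sigma @` A)) U ->
  exists2 j, (j < p)%N & A (iter j sigma U).
Proof.
move=> [i ltip [a Aa <-]]; exists ((p - i) %% p)%N.
  by rewrite ltn_pmod // (leq_ltn_trans _ ltip).
by rewrite iter_subp_inv // ltnW.
Qed.

Lemma bigcap_iter_image (A : set T) U :
  (forall j, (j < p)%N -> A (iter j sigma U)) ->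
  (\bigcap_(i in `I_p) (iter i sigma @` A)) U.
Proof.
move=> AU i ltip; exists (iter ((p - i) %% p)%N sigma U).
  by apply: AU; rewrite ltn_pmod // (leq_ltn_trans _ ltip).
by rewrite iter_inv_subp // ltnW.
Qed.
End PeriodicMap.

Section SetDistance.
Variables (R : realType) (E : normedModType R) (A : set E).

(* The real-valued distance to A; it is 0 when A is empty (edist_inf is
   then +oo), which keeps it continuous in every case. *)
Definition dist_set (U : E) : R := fine (edist_inf A U).

Lemma edist_fin_num (x y : E) : edist (x, y) \is a fin_num.
Proof.
apply/edist_finP; exists (`|x - y| + 1); first by rewrite ltr_wpDl.
by rewrite /= -ball_normE /ball_ /= ltrDl.
Qed.

Lemma edist_inf_fin_num (a : E) : A a -> forall U, edist_inf A U \is a fin_num.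
Proof.
move=> Aa U; rewrite ge0_fin_numE ?edist_inf_ge0 //.
have dU : (edist_inf A U <= edist (U, a))%E.
  by apply: ereal_inf_lbound; exists a.
apply: le_lt_trans dU _; rewrite ltey.
by apply: contraTneq (edist_fin_num U a) => ->.
Qed.

Lemma dist_set_continuous : continuous dist_set.
Proof.
have [A0|/set0P[a Aa]] := eqVneq A set0; last first.
  move=> U; apply: fine_cvg; rewrite fineK; last exact: edist_inf_fin_num Aa U.
  exact: edist_inf_continuous.
have -> : dist_set = cst 0.
  by apply/funext => U; rewrite /dist_set /edist_inf A0 image_set0 ereal_inf0.
exact: cst_continuous.
Qed.

Lemma dist_set_eq0 U : A U -> dist_set U = 0.
Proof. by move=> AU; rewrite /dist_set edist_inf0. Qed.

Lemma dist_set0_closed (a U : E) : A a -> closed A -> dist_set U = 0 -> A U.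
Proof.
move=> Aa clA dU0; have dinf0 : edist_inf A U = 0%E.
  by rewrite -(fineK (edist_inf_fin_num Aa U)); move: dU0; rewrite /dist_set => ->.
rewrite (closure_id A).1 // => B /nbhs_ballP [e e0 eB].
have [x [b Ab <-]] := lb_ereal_inf_adherent e0 (edist_inf_fin_num Aa U).
rewrite -/(edist_inf A U) dinf0 add0e => /edist_lt_ball /= bUb.
by exists b; split => //; exact: eB.
Qed.
End SetDistance.

Lemma linear_isometry_continuous (R : realType) (E : normedModType R)
    (f : {linear E -> E}) : (forall U, `|f U| = `|U|) -> continuous f.
Proof.
move=> f_iso U; apply/cvgrPdist_lt => e e0; near=> V.
by rewrite -linearB f_iso; near: V; exact: cvgr_dist_lt.
Unshelve. all: by end_near. Qed.

Lemma continuous_iter (T : topologicalType) (f : T -> T) (n : nat) :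
  continuous f -> continuous (iter n f).
Proof.
move=> fc; elim: n => [|n IHn] x /=; first exact: cvg_id.
by apply: continuous_comp; [exact: IHn | exact: fc].
Qed.

Lemma continuous_row (T U : topologicalType) (n : nat) (f : 'I_n -> T -> U) :
  (forall j, continuous (f j)) -> continuous (fun x => \row_j f j x).
Proof.
move=> fc x B [P Pnbhs PB].
suff : \forall y \near x, forall i j, P i j (f j y).
  by apply: filterS => y Py; apply: PB => i j; rewrite mxE.
apply: filter_forall => i; apply: filter_forall => j.
by apply: fc; move: (Pnbhs i j); rewrite mxE.
Qed.

Section ComplexContinuity.
Variable R : realType.

Lemma continuous_lipschitzC (g : R[i] -> R) :
  (forall z w : R[i], (`|g z - g w|)%:C <= `|z - w|) -> continuous (g : R[i]^o -> R).
Proof.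
move=> g_lip z; apply/(@cvgrPdist_lt _ _ _ _ (nbhs_filter z)) => e e0.
have : \forall w \near z, `|z - w| < e%:C :> R[i].
  by apply: (@cvgr_dist_lt _ (R[i]^o) _ _ (nbhs_filter z)) => //; rewrite ltcR.
by apply: filterS => w; rewrite -ltcR; apply: le_lt_trans.
Qed.

Lemma continuous_Re : continuous (fun z : R[i]^o => complex.Re z).
Proof.
apply: continuous_lipschitzC => z w.
by rewrite (_ : _ - _ = complex.Re (z - w)) ?normc_ge_Re //; case: z; case: w.
Qed.

Lemma continuous_Im : continuous (fun z : R[i]^o => complex.Im z).
Proof.
apply: continuous_lipschitzC => z w.
rewrite (_ : _ - _ = complex.Im (z - w)); last by case: z; case: w.
by rewrite normc_def lecR -sqrtr_sqr ler_sqrt ?lerDr ?addr_ge0 ?sqr_ge0.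
Qed.

Lemma continuous_realC : continuous (fun x : R => x%:C : R[i]^o).
Proof.
move=> x; apply/(@cvgrPdist_lt _ (R[i]^o)) => e; rewrite ltcE => /andP[/eqP Ie0 Re_gt0].
have -> : e = (complex.Re e)%:C by case: e Ie0 Re_gt0 => a b /= ->.
have : \forall t \near x, `|x - t| < complex.Re e.
  exact: (@cvgr_dist_lt _ _ _ _ (nbhs_filter x) id x cvg_id _ Re_gt0).
apply: filterS => t; rewrite -ltcR; apply: le_lt_trans.
by rewrite -rmorphB normc_def /= expr0n addr0 sqrtr_sqr.
Qed.

Lemma continuousC_sum (T : topologicalType) (n : nat) (g : 'I_n -> T -> R[i]^o) :
  (forall j, continuous (g j)) -> continuous (fun x => \sum_(j < n) g j x).
Proof.
by move=> gc; apply: continuous_big => [|j _]; [exact: add_continuous|exact: gc].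
Qed.

Lemma continuousC_expr (T : topologicalType) (g : T -> R[i]^o) (n : nat) :
  continuous g -> continuous (fun x => g x ^+ n).
Proof.
move=> gc x; elim: n => [|n IHn]; first exact: cst_continuous.
rewrite /continuous_at exprS; under eq_fun do rewrite exprS.
exact: continuousM (gc x) IHn.
Qed.
End ComplexContinuity.

Section ComplexCoordinates.
Variable R : realType.

Definition cvec_of (m : nat) (z : 'I_m -> R[i]) : cvec R m :=
  (\row_k complex.Re (z k), \row_k complex.Im (z k)).

Lemma cvec_of_eq0 (m : nat) (z : 'I_m -> R[i]) : cvec_of z = (0, 0) -> forall k, z k = 0.
Proof.
case=> /rowP Re0 /rowP Im0 k; move: (Re0 k) (Im0 k); rewrite !mxE.
by case: (z k) => a b /= -> ->.
Qed.

Lemma crot_cvec_of (m : nat) (t : R) (z : 'I_m -> R[i]) :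
  crot t (cvec_of z) = cvec_of (fun k => (cos t +i* sin t) * z k).
Proof.
rewrite /crot /=; congr pair; apply/rowP => k; rewrite !mxE /=.
  by case: (z k).
by case: (z k) => a b /=; rewrite addrC.
Qed.

Lemma continuous_cvec_of (T : topologicalType) (m : nat) (z : 'I_m -> T -> R[i]^o) :
  (forall k, continuous (z k)) -> continuous (fun x => cvec_of (fun k => z k x)).
Proof.
move=> zc.
have cRe : continuous (fun x => \row_k complex.Re (z k x)).
  apply: continuous_row => k y; by apply: continuous_comp; [exact: zc | exact: continuous_Re].
have cIm : continuous (fun x => \row_k complex.Im (z k x)).
  apply: continuous_row => k y; by apply: continuous_comp; [exact: zc | exact: continuous_Im].
by move=> x; exact: cvg_pair (cRe x) (cIm x).
Qed.
End ComplexCoordinates.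

Section RootOfUnity.
Variable R : realType.

Lemma de_moivre (t : R) (n : nat) :
  (cos t +i* sin t) ^+ n = cos (n%:R * t) +i* sin (n%:R * t).
Proof.
elim: n => [|n IHn]; first by rewrite expr0 mul0r cos0 sin0.
rewrite exprS IHn -[n.+1]addn1 natrD mulrDl mul1r [_ + t]addrC cosD sinD.
by congr (_ +i* _); rewrite /GRing.mul /=; lra.
Qed.

Definition omega (p : nat) : R[i] := cos (2 * pi / p%:R) +i* sin (2 * pi / p%:R).

Lemma omega_expr_p (p : nat) : (0 < p)%N -> omega p ^+ p = 1.
Proof.
move=> p_gt0; rewrite /omega de_moivre mulrCA divff ?pnatr_eq0 -?lt0n // mulr1.
by rewrite mulrC mulr_natr cos2pi sin2pi.
Qed.

Lemma omega_neq1 (p : nat) : (1 < p)%N -> omega p != 1.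
Proof.
move=> p_gt1; apply/eqP => -[cos_eq1 sin_eq0].
have [p2|p_gt2] := eqVneq p 2.
  move: cos_eq1; rewrite p2 mulrAC divff ?pnatr_eq0 // mul1r cospi; lra.
have : 0 < sin (2 * pi / p%:R : R); last by rewrite sin_eq0 ltxx.
apply: sin_gt0_pi; rewrite divr_gt0 ?mulr_gt0 ?pi_gt0 ?ltr0n 1?ltnW //=.
rewrite ltr_pdivrMr ?ltr0n 1?ltnW // mulrC ltr_pM2l ?pi_gt0 // ltr_nat.
by rewrite ltn_neqAle eq_sym p_gt2.
Qed.
End RootOfUnity.

Lemma prime_root_primitive (F : nzRingType) (p : nat) (z : F) :
  prime p -> z ^+ p = 1 -> z != 1 -> p.-primitive_root z.
Proof.
move=> p_pr zp z_neq1; have [m m_prim m_dvd] := prim_order_exists (prime_gt0 p_pr) zp.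
case/primeP: p_pr => _ /(_ m m_dvd) /orP [/eqP m1|/eqP <-//].
by move: m_prim; rewrite m1 => /prim_expr_order; rewrite expr1 => z1; rewrite z1 eqxx in z_neq1.
Qed.

(* In a field, when p is prime, w^((p - 1) k) is again a primitive p-th root
   for 0 < k < p, so some power of it gives back w. *)
Lemma prim_root_twist (F : fieldType) (p : nat) (w : F) (k : nat) :
  prime p -> p.-primitive_root w -> (0 < k < p)%N ->
  exists e, (w ^+ (p.-1 * k)) ^+ e = w.
Proof.
move=> p_pr w_prim /andP[k_gt0 k_lt_p].
have twist_prim : p.-primitive_root (w ^+ (p.-1 * k)).
  rewrite prim_root_exp_coprime // coprimeMl coprime_sym coprimenP ?prime_gt0 //=.
  by rewrite coprime_sym prime_coprime // gtnNdvd.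
have [e we] := prim_rootP twist_prim (prim_expr_order w_prim).
by exists e; rewrite -we.
Qed.

Section DiscreteFourier.
Variables (F : fieldType) (p : nat) (w : F).
Hypothesis w_prim : p.-primitive_root w.

Lemma sum_root_unity (u : F) : u ^+ p = 1 ->
  \sum_(k < p) u ^+ k = if u == 1 then p%:R else 0.
Proof.
move=> up; have [->|u_neq1] := eqVneq u 1.
  by under eq_bigr do rewrite expr1n; rewrite sumr_const card_ord.
have : (u - 1) * \sum_(k < p) u ^+ k = 0 by rewrite -subrX1 up subrr.
by move/eqP; rewrite mulf_eq0 subr_eq0 (negPf u_neq1) => /eqP.
Qed.

Lemma sum_prim_root_expr (n : nat) :
  \sum_(k < p) (w ^+ n) ^+ k = if (p %| n)%N then p%:R else 0.
Proof.
rewrite sum_root_unity -?(prim_order_dvd w_prim) //.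
by rewrite -exprM mulnC exprM (prim_expr_order w_prim) expr1n.
Qed.

Definition dft (x : nat -> F) (k : nat) : F := \sum_(j < p) x j * w ^+ (k * j).

Lemma dvdn_shift (j l : nat) : (j < p)%N -> (l < p)%N -> (p %| j + (p - l))%N = (j == l).
Proof.
move=> jp lp; apply/idP/eqP => [|->]; last by rewrite subnKC ?dvdnn // ltnW.
move=> /dvdnP [q]; case: q => [|[|q]]; lia.
Qed.

(* Fourier inversion at index l, written with nonnegative exponents only. *)
Lemma dft_inversion (x : nat -> F) (l : 'I_p) :
  \sum_(k < p) dft x k * w ^+ (k * (p - l)) = p%:R * x l.
Proof.
under eq_bigr do rewrite /dft mulr_suml.
rewrite exchange_big /=.
transitivity (\sum_(j < p) x j * \sum_(k < p) (w ^+ (j + (p - l))) ^+ k).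
  apply: eq_bigr => j _; rewrite mulr_sumr; apply: eq_bigr => k _.
  by rewrite -mulrA -exprD -exprM -mulnDr mulnC.
under eq_bigr => j _ do rewrite sum_prim_root_expr dvdn_shift //.
rewrite (bigD1 l) //= eqxx big1 => [|j /negPf jl]; last by rewrite -val_eqE in jl; rewrite jl mulr0.
by rewrite addr0 mulrC.
Qed.

Lemma dft_const (x : nat -> F) :
  (forall k, (0 < k < p)%N -> dft x k = 0) ->
  forall j l, (j < p)%N -> (l < p)%N -> x j = x l.
Proof.
move=> dft0; have p_gt0 := prim_order_gt0 w_prim.
have px_dft0 (j : 'I_p) : p%:R * x j = dft x 0.
  rewrite -dft_inversion (bigD1 (Ordinal p_gt0)) //= big1 ?addr0 ?expr0 ?mulr1 //.
  move=> k k_neq0; rewrite dft0 ?mul0r // ltn_ord andbT lt0n.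
  by apply: contra k_neq0 => /eqP k0; apply/eqP/val_inj.
move=> j l jp lp; apply: (mulfI (prim_root_natf_neq0 w_prim)).
by rewrite (px_dft0 (Ordinal jp)) (px_dft0 (Ordinal lp)).
Qed.

Lemma dft_shift (x : nat -> F) (k : nat) :
  x p = x 0%N -> dft x k = w ^+ k * dft (fun j => x j.+1) k.
Proof.
have [q pq] : exists q, p = q.+1 by exists p.-1; rewrite prednK // (prim_order_gt0 w_prim).
move=> xp; rewrite /dft mulr_sumr pq in xp *.
rewrite [LHS]big_ord_recl [RHS]big_ord_recr /= addrC; congr (_ + _).
  rewrite xp mulrCA -exprD addnC -mulnSr -pq muln0 (mulnC k p) exprM.
  by rewrite (prim_expr_order w_prim) expr1n.
by apply: eq_bigr => i _; rewrite (_ : bump 0 i = i.+1) // mulrCA -exprD mulnSr addnC.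
Qed.
End DiscreteFourier.

Lemma gamma_le (R : realType) (E : normedModType R) (sigma : E -> E) (p : nat)
    (A : set E) (m : nat) :
  has_index sigma p A m -> exists m', gamma sigma p A = Some m' /\ (m' <= m)%N.
Proof.
move=> Am; rewrite /gamma; case: pselect => [ex_m|]; last by move=> /(_ (ex_intro _ m Am)).
by eexists; split; [reflexivity | case: ex_minnP => m' _; apply; exact/asboolP].
Qed.

Lemma has_index_complex (R : realType) (E : normedModType R) (sigma : E -> E)
    (p : nat) (A : set E) (m : nat) (z : 'I_m -> E -> R[i]^o) :
  (forall k, continuous (z k)) ->
  (forall U, A U -> exists k, z k U != 0) ->
  (forall U k, A U -> z k (sigma U) = omega R p * z k U) ->
  has_index sigma p A m.
Proof.
move=> zc z_nz z_rot; exists (fun U => cvec_of (fun k => z k U)); split.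
- exact/continuous_subspaceT/continuous_cvec_of.
- move=> U AU; have [k] := z_nz U AU; apply: contra => /eqP z0.
  exact/eqP/(cvec_of_eq0 z0).
- move=> U AU; rewrite crot_cvec_of; congr cvec_of; apply/funext => k.
  exact: z_rot.
Qed.

Section FourierCoordinates.
Variables (R : realType) (E : normedModType R) (p : nat).
Variables (sigma : {linear E -> E}) (A : set E).
Hypotheses (p_prime : prime p) (sigma_isometry : forall U, `|sigma U| = `|U|).
Hypothesis sigma_period : forall U, iter p sigma U = U.

Let w : R[i]^o := omega R p.

Lemma omega_prim : p.-primitive_root w.
Proof.
apply: prime_root_primitive => //; first exact/omega_expr_p/prime_gt0.
exact/omega_neq1/prime_gt1.
Qed.

Definition orbit_dist (U : E) (j : nat) : R[i]^o := (dist_set A (iter j sigma U))%:C.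

Definition fourier_coord (k : nat) (U : E) : R[i]^o := dft p w (orbit_dist U) k.

Lemma fourier_coord_continuous k : continuous (fourier_coord k).
Proof.
apply: continuousC_sum => j.
have dist_cont : continuous (fun U => orbit_dist U j : R[i]^o).
  move=> U; apply: continuous_comp; last exact: continuous_realC.
  apply: continuous_comp; last exact: dist_set_continuous.
  exact/continuous_iter/linear_isometry_continuous.
by move=> U; exact: continuousM (dist_cont U) (cvg_cst _).
Qed.

(* The coefficients are twisted by w^(-k) = w^((p - 1) k) under sigma. *)
Lemma fourier_coord_sigma k U :
  fourier_coord k (sigma U) = w ^+ (p.-1 * k) * fourier_coord k U.
Proof.
have orbit_period : orbit_dist U p = orbit_dist U 0 by rewrite /orbit_dist sigma_period.
rewrite /fourier_coord (dft_shift omega_prim k orbit_period) mulrA -exprD.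
rewrite -mulSnr prednK ?prime_gt0 // exprM (prim_expr_order omega_prim) expr1n mul1r.
by congr dft; apply/funext => j; rewrite /orbit_dist iterSr.
Qed.

Lemma twisted_coord k : (0 < k < p)%N ->
  exists z : E -> R[i]^o, [/\ continuous z,
    forall U, z U = 0 -> fourier_coord k U = 0 &
    forall U, z (sigma U) = w * z U].
Proof.
move=> kp; have [e twist_e] := prim_root_twist p_prime omega_prim kp.
exists (fun U => fourier_coord k U ^+ e); split.
- exact/continuousC_expr/fourier_coord_continuous.
- by move=> U /eqP; rewrite expf_eq0 => /andP[_ /eqP].
- by move=> U; rewrite fourier_coord_sigma exprMn twist_e.
Qed.

Hypotheses (A_closed : closed A) (A_cap : \bigcap_(i in `I_p) (iter i sigma @` A) = set0).

(* On Z_p(A) some nonconstant Fourier coefficient is nonzero: otherwise all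
   orbit distances agree, one of them vanishes, and U would lie in every
   sigma^i(A). *)
Lemma fourier_coord_nonvanishing U : Zp_orbit sigma p A U ->
  exists2 k, (0 < k < p)%N & fourier_coord k U != 0.
Proof.
move=> orbU; have [j jp Aj] := Zp_orbitP sigma_period orbU.
apply: contrapT => no_coord.
have coord0 k : (0 < k < p)%N -> dft p w (orbit_dist U) k = 0.
  by move=> kp; have [//|nz] := eqVneq (fourier_coord k U) 0; case: no_coord; exists k.
have orbit_in_A l : (l < p)%N -> A (iter l sigma U).
  move=> lp; apply: (dist_set0_closed Aj A_closed); apply: complexI.
  by rewrite -[LHS]/(orbit_dist U l) (dft_const omega_prim coord0 lp jp) /orbit_dist dist_set_eq0.
by have := bigcap_iter_image sigma_period orbit_in_A; rewrite A_cap.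
Qed.
Lemma Zp_orbit_has_index : has_index sigma p (Zp_orbit sigma p A) p.-1.
Proof.
have /choice [z z_spec] (k : 'I_p.-1) : exists z : E -> R[i]^o, [/\ continuous z,
    forall U, z U = 0 -> fourier_coord k.+1 U = 0 & forall U, z (sigma U) = w * z U].
  by apply: twisted_coord; rewrite ltn0Sn -ltn_predRL ltn_ord.
apply: (has_index_complex (z := z)).
- by move=> k; have [] := z_spec k.
- move=> U /fourier_coord_nonvanishing [[//|k] /andP[_ kp] coord_nz].
  have k_lt : (k < p.-1)%N by rewrite ltn_predRL.
  exists (Ordinal k_lt); apply: contra coord_nz => /eqP z0.
  by have [_ -> //] := z_spec (Ordinal k_lt).
- by move=> U k _; have [_ _ ->] := z_spec k.
Qed.
End FourierCoordinates.

Theorem mainTheorem15 (R : realType) (E : completeNormedModType R) (p : nat)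
    (sigma : {linear E -> E}) (A : set E) :
  prime p ->
  (forall U : E, `|sigma U| = `|U|) ->
  (forall U : E, iter p sigma U = U) ->
  compact A ->
  Zp_orbit sigma p A `<=` ~` Fix sigma ->
  \bigcap_(i in `I_p) (iter i sigma @` A) = set0 ->
  exists m : nat, gamma sigma p (Zp_orbit sigma p A) = Some m /\ (m <= p.-1)%N.
Proof.
move=> p_prime sigma_iso sigma_period A_compact _ A_cap.
have A_closed : closed A by apply: compact_closed => //; exact: norm_hausdorff.
apply: gamma_le; exact: Zp_orbit_has_index.
Qed.
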